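(* The proof system $\mathbb{SKHM}$ is sound with respect to the class of all models: every formula of $\mathbf{L_{Khm}}$ derivable in $\mathbb{SKHM}$ is true at every state of every model.
   Context: Fix a countable set of proposition letters $\mathbf{P}$ and a countable non-empty set of action symbols $\Sigma$. The language $\mathbf{L_{Khm}}$ is given by $\phi ::= p \mid \neg\phi \mid (\phi\wedge\phi) \mid \mathcal{K}hm(\phi,\phi,\phi)$ with $p\in\mathbf{P}$; $\top,\bot,\vee,\to$ are the usual abbreviations, and $\mathcal{U}\phi$ abbreviates $\mathcal{K}hm(\neg\phi,\top,\bot)$. A model is a triple $(S,\mathcal{R},\mathcal{V})$ with $S$ a non-empty set, $\mathcal{R}:\Sigma\to 2^{S\times S}$, and $\mathcal{V}:S\to 2^{\mathbf{P}}$. Write $s\xrightarrow{a}t$ if $(s,t)\in\mathcal{R}(a)$; for $\sigma=a_1\cdots a_n\in\Sigma^*$ write $s\xrightarrow{\sigma}t$ if there are $s_2,\dots,s_n$ with $s\xrightarrow{a_1}s_2\xrightarrow{a_2}\cdots\xrightarrow{a_{n-1}}s_n\xrightarrow{a_n}t$ (for the empty sequence $\epsilon$, $s\xrightarrow{\epsilon}s$). Let $\sigma_k$ be the initial segment $a_1\cdots a_k$ ($\sigma_0=\epsilon$). $\sigma$ is strongly executable at $s'$ if for each $0\le k<n$, $s'\xrightarrow{\sigma_k}t$ implies $t$ has at least one $a_{k+1}$-successor. $\sigma$ is strongly $\chi$-executable at $s'$ if it is strongly executable at $s'$ and $s'\xrightarrow{\sigma_k}t$ implies $\mathcal{M},t\vDash\chi$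 for all $0<k<n$. Semantics: Booleans as usual, $\mathcal{M},s\vDash p$ iff $p\in\mathcal{V}(s)$, and $\mathcal{M},s\vDash\mathcal{K}hm(\psi,\chi,\phi)$ iff there is $\sigma\in\Sigma^*$ such that for every $s'$ with $\mathcal{M},s'\vDash\psi$, $\sigma$ is strongly $\chi$-executable at $s'$ and $\mathcal{M},t\vDash\phi$ for all $t$ with $s'\xrightarrow{\sigma}t$. The system $\mathbb{SKHM}$ has axioms: all propositional tautologies; DISTU: $\mathcal{U}p\wedge\mathcal{U}(p\to q)\to\mathcal{U}q$; TU: $\mathcal{U}p\to p$; 4KhmU: $\mathcal{K}hm(p,o,q)\to\mathcal{U}\mathcal{K}hm(p,o,q)$; 5KhmU: $\neg\mathcal{K}hm(p,o,q)\to\mathcal{U}\neg\mathcal{K}hm(p,o,q)$; EMPKhm: $\mathcal{U}(p\to q)\to\mathcal{K}hm(p,\bot,q)$; COMPKhm: $\mathcal{K}hm(p,o,r)\wedge\mathcal{K}hm(r,o,q)\wedge\mathcal{U}(r\to o)\to\mathcal{K}hm(p,o,q)$; ONEKhm: $\mathcal{K}hm(p,o,q)\wedge\neg\mathcal{K}hm(p,\bot,q)\to\mathcal{K}hm(p,\bot,o)$; UKhm: $\mathcal{U}(p'\to p)\wedge\mathcal{U}(o\to o')\wedge\mathcal{U}(q\to q')\wedge\mathcal{K}hm(p,o,q)\to\mathcal{K}hm(p',o',q')$; and rules MP (from $\varphi$ and $\varphi\to\psi$ infer $\psi$), NECU (from $\varphi$ infer $\mathcal{U}\varphi$), SUB (uniform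 substitution: from $\varphi(p)$ infer $\varphi[\psi/p]$). Here $p,q,r,o,p',q',o'$ are proposition letters. *)

From mathcomp Require Import all_boot.
Set Implicit Arguments. Unset Strict Implicit. Unset Printing Implicit Defensive.

Inductive form (P : Type) : Type :=
| Var of P
| Neg of form P
| And of form P & form P
| Khm of form P & form P & form P.
Arguments Var {P}. Arguments Neg {P}. Arguments And {P}. Arguments Khm {P}.

Section Syntax.
Variable P : eqType.
Variable p0 : P.

Definition Top : form P := Neg (And (Var p0) (Neg (Var p0))).
Definition Bot : form P := Neg Top.
Definition Or (a b : form P) : form P := Neg (And (Neg a) (Neg b)).
Definition Imp (a b : form P) : form P := Neg (And a (Neg b)).
Definition U (a : form P) : form P := Khm (Neg a) Top Bot.

Fixpoint peval (v : form P -> bool) (f : form P) : bool :=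
  match f with
  | Var p => v (Var p)
  | Neg a => ~~ peval v a
  | And a b => peval v a && peval v b
  | Khm a c b => v (Khm a c b)
  end.
Definition tautology (f : form P) : Prop := forall v, peval v f = true.

Fixpoint subst (p : P) (psi : form P) (f : form P) : form P :=
  match f with
  | Var q => if q == p then psi else Var q
  | Neg a => Neg (subst p psi a)
  | And a b => And (subst p psi a) (subst p psi b)
  | Khm a c b => Khm (subst p psi a) (subst p psi c) (subst p psi b)
  end.

Definition V (p : P) : form P := Var p.

Inductive derivable : form P -> Prop :=
| D_taut f : tautology f -> derivable f
| D_DISTU p q : derivable (Imp (And (U (V p)) (U (Imp (V p) (V q)))) (U (V q)))
| D_TU p : derivable (Imp (U (V p)) (V p))
| D_4KhmU p o q : derivable (Imp (Khm (V p) (V o) (V q)) (U (Khm (V p) (V o) (V q))))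
| D_5KhmU p o q :
    derivable (Imp (Neg (Khm (V p) (V o) (V q))) (U (Neg (Khm (V p) (V o) (V q)))))
| D_EMPKhm p q : derivable (Imp (U (Imp (V p) (V q))) (Khm (V p) Bot (V q)))
| D_COMPKhm p o r q :
    derivable (Imp (And (And (Khm (V p) (V o) (V r)) (Khm (V r) (V o) (V q)))
                        (U (Imp (V r) (V o))))
                   (Khm (V p) (V o) (V q)))
| D_ONEKhm p o q :
    derivable (Imp (And (Khm (V p) (V o) (V q)) (Neg (Khm (V p) Bot (V q))))
                   (Khm (V p) Bot (V o)))
| D_UKhm p o q p' o' q' :
    derivable (Imp (And (And (And (U (Imp (V p') (V p))) (U (Imp (V o) (V o'))))
                             (U (Imp (V q) (V q'))))
                        (Khm (V p) (V o) (V q)))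
                   (Khm (V p') (V o') (V q')))
| D_MP f g : derivable f -> derivable (Imp f g) -> derivable g
| D_NECU f : derivable f -> derivable (U f)
| D_SUB f p psi : derivable f -> derivable (subst p psi f).
End Syntax.

Record model (P Sigma : Type) := Model {
  st : Type;
  st_inhabited : inhabited st;
  rel : Sigma -> st -> st -> Prop;
  val : st -> P -> Prop
}.

Section Semantics.
Variables (P Sigma : Type) (M : model P Sigma).

Fixpoint reach (s : st M) (sg : seq Sigma) (t : st M) : Prop :=
  match sg with
  | [::] => s = t
  | a :: sg' => exists u, @rel _ _ M a s u /\ reach u sg' t
  end.

(* sigma strongly chi-executable at s (sigma_k = prefix of length k). *)
Definition sexec (chi : st M -> Prop) (s : st M) (sg : seq Sigma) : Prop :=
  (forall sg1 a sg2 t, sg = sg1 ++ a :: sg2 -> reach s sg1 t ->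
       exists u, @rel _ _ M a t u) /\
  (forall sg1 sg2 t, sg = sg1 ++ sg2 -> sg1 <> [::] -> sg2 <> [::] ->
       reach s sg1 t -> chi t).

Fixpoint sat (f : form P) (s : st M) {struct f} : Prop :=
  match f with
  | Var p => @val _ _ M s p
  | Neg a => ~ sat a s
  | And a b => sat a s /\ sat b s
  | Khm a c b => exists sg : seq Sigma, forall s', sat a s' ->
        sexec (sat c) s' sg /\ (forall t, reach s' sg t -> sat b t)
  end.
End Semantics.

From Pilot Require Import Defs.
From mathcomp Require Import all_boot boolp.

Set Implicit Arguments. Unset Strict Implicit. Unset Printing Implicit Defensive.

(* The truth of [Khm(psi, chi, phi)] does not depend on the state: it asserts a
   single plan that, from every psi-state, is strongly chi-executable and ends
   in phi-states.  This gives 4KhmU and 5KhmU at once, and makes [U] the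
   universal modality, because a strongly executable plan can always be run to
   completion and so never leads from a satisfiable precondition into the empty
   set.  Plans concatenate (COMPKhm), and uniform substitution is sound because
   re-valuing [p] as the extension of [psi] commutes with [sat]. *)

Section KnowingHow.
Variables (P Sigma : Type) (M : model P Sigma).
Implicit Types (s t u : st M) (sg : seq Sigma) (chi : st M -> Prop).

Lemma reach_cat s sg1 sg2 t :
  reach s (sg1 ++ sg2) t <-> exists2 u, reach s sg1 u & reach u sg2 t.
Proof.
elim: sg1 s => [|a sg1 IH] s /=; first by split=> [|[_ <-]]; [exists s|].
split=> [[u [su /IH[w uw wt]]]|[w [u [su uw]] wt]]; first by exists w; [exists u|].
by exists u; split; last by apply/IH; exists w.
Qed.

Lemma sexec_nil chi s : sexec chi s [::].
Proof. by split=> [[]|[]]. Qed.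

Lemma sexec_cons chi s a sg :
  sexec chi s (a :: sg) <->
  (exists u, Defs.rel a s u) /\
  (forall u, Defs.rel a s u -> (sg <> [::] -> chi u) /\ sexec chi u sg).
Proof.
split=> [[ex ch]|[[u0 su0] ex_ch]].
- split; first exact: (ex [::] a sg s).
  move=> u su; split; first by move=> nsg; apply: (ch [:: a] sg) => //; exists u.
  split=> [sg1 b sg2 t E R|sg1 sg2 t E n1 n2 R].
  + by apply: (ex (a :: sg1) b sg2 t); [rewrite E | exists u].
  + by apply: (ch (a :: sg1) sg2 t); [rewrite E | | | exists u].
- split=> [[|x sg1] b sg2 t /= [<- E]|[|x sg1] sg2 t // [<- E] _ n2].
  + by move=> <-; exists u0.
  + by move=> [u [su R]]; apply: (ex_ch u su).2.1 sg1 b sg2 t E R.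
  + case: sg1 E => [|y sg1] E [u [su R]].
      by rewrite -R; apply: (ex_ch u su).1; rewrite E.
    exact: (ex_ch u su).2.2 (y :: sg1) sg2 t E _ n2 R.
Qed.

Lemma sexec1 chi s a : sexec chi s [:: a] <-> exists u, Defs.rel a s u.
Proof.
rewrite sexec_cons; split=> [[] //|ex]; split=> // u _.
by split; [|apply: sexec_nil].
Qed.

Lemma sexec_mono chi1 chi2 s sg :
  (forall t, chi1 t -> chi2 t) -> sexec chi1 s sg -> sexec chi2 s sg.
Proof.
by move=> sub12 [ex ch]; split=> // sg1 sg2 t E n1 n2 R; apply/sub12/(ch sg1 sg2).
Qed.

Lemma sexec_reach chi s sg : sexec chi s sg -> exists t, reach s sg t.
Proof.
elim: sg s => [|a sg IH] s; first by exists s.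
move=> /sexec_cons[[u su] ex_ch]; have [t ut] := IH u (ex_ch u su).2.
by exists t, u.
Qed.

Lemma sexec_cat chi s sg1 sg2 :
  sexec chi s sg1 -> (forall t, reach s sg1 t -> chi t /\ sexec chi t sg2) ->
  sexec chi s (sg1 ++ sg2).
Proof.
elim: sg1 s => [|a sg1 IH] s; first by move=> _ /(_ s erefl)[].
move=> /sexec_cons[ex ex_ch] hsg2; apply/sexec_cons; split=> // u su.
have [ch_u exu] := ex_ch u su; split.
- case: sg1 hsg2 ch_u {IH exu ex_ch} => [|b sg1] hsg2 ch_u _; last exact: ch_u.
  by apply: (hsg2 u _).1; exists u.
- by apply: IH exu _ => t ut; apply: hsg2; exists u.
Qed.

Definition knows_how (A C B : st M -> Prop) : Prop :=
  exists sg, forall s, A s -> sexec C s sg /\ (forall t, reach s sg t -> B t).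

Lemma knows_how_mono (A C B A' C' B' : st M -> Prop) :
  (forall s, A' s -> A s) -> (forall s, C s -> C' s) -> (forall s, B s -> B' s) ->
  knows_how A C B -> knows_how A' C' B'.
Proof.
move=> AA' CC' BB' [sg plan]; exists sg => s /AA' /plan[ex post].
by split=> [|t /post/BB' //]; apply: sexec_mono ex.
Qed.

Lemma knows_how_nil (A C B : st M -> Prop) :
  (forall s, A s -> B s) -> knows_how A C B.
Proof.
by move=> AB; exists [::] => s As; split=> [|_ <-]; [apply: sexec_nil | apply: AB].
Qed.

Lemma knows_how_goal (A C B : st M -> Prop) s :
  knows_how A C B -> A s -> exists t, B t.
Proof.
move=> [sg plan] /plan[/sexec_reach[t reach_t] post].
by exists t; apply: post.
Qed.

Lemma knows_how_comp (A C R B : st M -> Prop) :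
  knows_how A C R -> knows_how R C B -> (forall s, R s -> C s) -> knows_how A C B.
Proof.
move=> [sg1 plan1] [sg2 plan2] RC; exists (sg1 ++ sg2) => s /plan1[ex1 post1].
split=> [|t /reach_cat[u /post1/plan2[_ post2] /post2 //]].
apply: sexec_cat ex1 _ => t /post1 Rt.
by split; [apply: RC | apply: (plan2 t Rt).1].
Qed.

(* A plan of length at most one visits no intermediate state, so it also
   serves for any intermediate constraint [D]; a longer plan [a :: _] yields the
   plan [[:: a]] leading into [C]. *)
Lemma knows_how_one (A C B D : st M -> Prop) :
  knows_how A C B -> ~ knows_how A D B -> knows_how A D C.
Proof.
move=> [[|a [|b sg]] plan] noD.
- case: noD; exists [::] => s /plan[_ post]; split=> //; exact: sexec_nil.
- case: noD; exists [:: a] => s /plan[/sexec1 ex post].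
  by split=> //; apply/sexec1.
- exists [:: a] => s /plan[/sexec_cons[ex ex_ch] _].
  by split=> [|t [u [su <-]]]; [apply/sexec1 | apply: (ex_ch u su).1].
Qed.

End KnowingHow.

Section Truth.
Variables (P : eqType) (Sigma : Type) (p0 : P) (M : model P Sigma).
Implicit Types (s t : st M) (a b : form P).

Lemma sat_Top s : sat (Top p0) s.
Proof. by case. Qed.

Lemma sat_Bot s : ~ sat (Bot p0) s.
Proof. by apply; apply: sat_Top. Qed.

Lemma sat_And a b s : sat (And a b) s <-> sat a s /\ sat b s.
Proof. by []. Qed.

Lemma sat_Imp a b s : sat (Imp a b) s <-> (sat a s -> sat b s).
Proof. by rewrite /= -implypN not_notE. Qed.

Lemma sat_U a s : sat (U p0 a) s <-> forall t, sat a t.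
Proof.
split=> [kh t|valid]; last by apply: knows_how_nil => t /(_ (valid t)).
by apply: contrapT => /(knows_how_goal kh)[t' /sat_Bot].
Qed.

Lemma sat_U_Imp a b s : sat (U p0 (Imp a b)) s <-> forall t, sat a t -> sat b t.
Proof. by rewrite sat_U; split=> H t; apply/sat_Imp/H. Qed.

Lemma sat_peval f s : peval (fun g => `[< sat g s >]) f = `[< sat f s >].
Proof.
elim: f => [p|a IHa|a IHa b IHb|a _ c _ b _] //=.
  by rewrite IHa asbool_neg.
by rewrite IHa IHb asbool_and.
Qed.

Lemma sat_tautology f s : tautology f -> sat f s.
Proof. by move=> /(_ (fun g => `[< sat g s >])); rewrite sat_peval => /asboolP. Qed.

Definition subst_model (p : P) (psi : form P) : model P Sigma :=
  Model (st_inhabited M) (@Defs.rel _ _ M)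
        (fun s q => if q == p then sat psi s else Defs.val s q).

Lemma sat_subst_model p psi f s :
  sat (M := subst_model p psi) f s <-> sat (subst p psi f) s.
Proof.
elim: f s => [q|a IHa|a IHa b IHb|a IHa c IHc b IHb] s /=.
- by case: (q == p).
- by rewrite IHa.
- by rewrite IHa IHb.
- by split; apply: knows_how_mono => t; rewrite ?IHa ?IHc ?IHb.
Qed.

End Truth.

Theorem mainTheorem1 (P Sigma : countType) (p0 : P) (a0 : Sigma) (f : form P) :
  derivable p0 f -> forall (M : model P Sigma) (s : st M), @sat P Sigma M f s.
Proof.
elim=> {f} [f /sat_tautology //|p q|p|p o q|p o q|p q|p o r q|p o q|p o q p' o' q'
           |f g _ IHf _ IHfg|f _ IHf|f p psi _ IHf] M s.
- apply/sat_Imp => /sat_And[/sat_U Hp /sat_U_Imp Hpq].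
  by apply/sat_U => t; apply/Hpq/Hp.
- by apply/sat_Imp => /sat_U.
- by apply/sat_Imp => kh; apply/sat_U.
- by apply/sat_Imp => nkh; apply/sat_U.
- by apply/sat_Imp => /sat_U_Imp; apply: knows_how_nil.
- by apply/sat_Imp => /sat_And[[kh_pr kh_rq] /sat_U_Imp]; apply: knows_how_comp.
- by apply/sat_Imp => /sat_And[kh nkh]; apply: knows_how_one kh nkh.
- apply/sat_Imp => /sat_And[/sat_And[/sat_And[/sat_U_Imp Hp /sat_U_Imp Ho]]].
  by move=> /sat_U_Imp Hq kh; apply: knows_how_mono kh.
- by move/sat_Imp: (IHfg M s); apply.
- by apply/sat_U.
- exact/sat_subst_model.
Qed.
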